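(* For any positive integer $n$, define \[ S(n;t,y;q) := 1 + \sum_{j \geq 1} \left( t\, \overline{{ n-1 \brack j-1 }}_{q,t} \frac{(-tyq;q)_{j-1}}{(yq;q)_{j-1}} y^j q^{j^2} + \overline{{ n \brack j }}_{q,t} \frac{(-tyq;q)_{j}}{(yq;q)_{j}} y^j q^{j^2} \right). \] Then \[ S(n;t,y;q)= \frac{(-tyq;q)_{n}}{(yq;q)_{n}}. \]
   Context: An overpartition is a partition in which the last occurrence of each distinct part size may be overlined; its weight $|\lambda|$ is the sum of its parts. For integers $0\le b\le a$, $\overline{{a \brack b}}_{q,t}=\sum_{\lambda} t^{\#_o(\lambda)} q^{|\lambda|}$, the sum over all overpartitions $\lambda$ with largest part at most $a-b$ and at most $b$ parts, $\#_o(\lambda)$ being the number of overlined parts; for other integer pairs $(a,b)$ (e.g. $b>a$) it is $0$, so the sum defining $S$ is finite. $(x;q)_k=\prod_{j=1}^k(1-xq^{j-1})$, $(x;q)_0=1$. *)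

From mathcomp Require Import all_boot all_order all_algebra.
Set Implicit Arguments. Unset Strict Implicit. Unset Printing Implicit Defensive.
Import GRing.Theory.
Local Open Scope ring_scope.

(* An overpartition is represented as the list of its parts written in
   nonincreasing order, each part paired with a flag telling whether it is
   overlined.  Consecutive parts x, y (y right after x) satisfy y <= x, and
   if x is overlined then y < x (x must be the last occurrence of its size). *)
Definition overpart_rel (x y : nat * bool) : bool :=
  if x.2 then (y.1 < x.1)%N else (y.1 <= x.1)%N.

Definition is_overpartition (s : seq (nat * bool)) : bool :=
  all (fun p => 0 < p.1)%N s && sorted overpart_rel s.

Definition op_weight (s : seq (nat * bool)) : nat := sumn (map fst s).
Definition op_noverlined (s : seq (nat * bool)) : nat := count snd s.

Definition op_decode (m : nat) (s : seq ('I_m.+1 * bool)) : seq (nat * bool) :=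
  map (fun x => (nat_of_ord x.1, x.2)) s.

(* Overpartition analogue of the Gaussian polynomial:
   sum over overpartitions with largest part <= a - b and at most b parts
   of t^(#overlined) q^(weight); 0 if b > a. Every such overpartition occurs
   exactly once as op_decode of a k-tuple, k = number of parts <= b. *)
Definition ogauss {R : comRingType} (a b : nat) (q t : R) : R :=
  if (b <= a)%N then
    \sum_(k < b.+1)
      \sum_(s : k.-tuple ('I_(a - b).+1 * bool) |
             is_overpartition (op_decode s))
        t ^+ op_noverlined (op_decode s) * q ^+ op_weight (op_decode s)
  else 0.

Definition qpoch {R : comRingType} (x q : R) (k : nat) : R :=
  \prod_(i < k) (1 - x * q ^+ i).

(* S(n;t,y;q); terms with j > n vanish (both Gaussian factors are 0). *)
Definition Sfun {F : fieldType} (n : nat) (t y q : F) : F :=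
  1 + \sum_(1 <= j < n.+1)
        ( t * ogauss (n.-1) (j.-1) q t
            * (qpoch (- t * y * q) q j.-1 / qpoch (y * q) q j.-1)
            * y ^+ j * q ^+ (j ^ 2)
        + ogauss n j q t
            * (qpoch (- t * y * q) q j / qpoch (y * q) q j)
            * y ^+ j * q ^+ (j ^ 2)).

(* Removing the largest part of an overpartition (overlined or not) gives a
   Pascal-type recurrence for the overpartition Gaussian polynomials,
     [k+1, j+1] = [k, j+1] + q^(k-j) ([k, j] + t [k-1, j]).
   Substituting it into S yields the functional recurrence
     S(k+2; y) = S(k+1; y)
                 + y q^(k+2) (1 + tyq)/(1 - yq) (S(k+1; yq) + t S(k; yq)),
   which (-tyq;q)_k / (yq;q)_k satisfies as well, so the identity follows by
   induction on k from k = 0 and k = 1. *)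

From mathcomp Require Import all_boot all_order all_algebra.
From mathcomp Require Import zify ring.
Set Implicit Arguments. Unset Strict Implicit. Unset Printing Implicit Defensive.
Import GRing.Theory.
Local Open Scope ring_scope.

Lemma big_tuple_cons (R : Type) (idx : R) (op : Monoid.com_law idx)
    (T : finType) k (P : pred (k.+1.-tuple T)) (F : k.+1.-tuple T -> R) :
  \big[op/idx]_(s : k.+1.-tuple T | P s) F s =
  \big[op/idx]_(x : T) \big[op/idx]_(s : k.-tuple T | P [tuple of x :: s])
     F [tuple of x :: s].
Proof.
rewrite (pair_big_dep xpredT (fun x (s : k.-tuple T) => P [tuple of x :: s])
  (fun x (s : k.-tuple T) => F [tuple of x :: s])) /=.
rewrite (reindex (fun p : T * k.-tuple T => [tuple of p.1 :: p.2])) //.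
exists (fun s => (thead s, behead_tuple s)) => [[x s] _ | s _] /=.
  by rewrite theadE; congr pair; apply: val_inj.
by rewrite -tuple_eta.
Qed.

Definition is_bounded_overpartition (M : nat) (s : seq (nat * bool)) : bool :=
  is_overpartition s && all (fun p => p.1 <= M)%N s.

Lemma overpart_rel_trans : transitive overpart_rel.
Proof. by move=> y x z; rewrite /overpart_rel; case: x.2; case: y.2 => /=; lia. Qed.

Lemma bounded_overpartition_cons M i b s :
  is_bounded_overpartition M ((i, b) :: s) =
  [&& (0 < i)%N, (i <= M)%N &
      is_bounded_overpartition (if b then i.-1 else i) s].
Proof.
rewrite /is_bounded_overpartition /is_overpartition /=.
rewrite path_sortedE; last exact: overpart_rel_trans.
case: (ltnP 0 i) => //= i_gt0; case: (leqP i M) => /= [iM|]; last by rewrite !andbF.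
have bound_rel : all (overpart_rel (i, b)) s && all (fun p => p.1 <= M)%N s =
                  all (fun p => p.1 <= if b then i.-1 else i)%N s.
  by rewrite -all_predI; apply: eq_all => -[p c]; rewrite /overpart_rel /=; case: b; lia.
rewrite -bound_rel.
by rewrite -!andbA [in RHS](andbCA (sorted _ _)).
Qed.

Section OverpartitionGF.
Variables (R : comNzRingType) (q t : R).

Definition ovp_term (s : seq (nat * bool)) : R :=
  t ^+ op_noverlined s * q ^+ op_weight s.

Lemma ovp_term_cons i b s : ovp_term ((i, b) :: s) = t ^+ b * q ^+ i * ovp_term s.
Proof. by rewrite /ovp_term /op_noverlined /op_weight /= !exprD; ring. Qed.

(* Overpartitions with exactly k parts, all at most M, counted by their
   largest part x: the remaining parts are at most x, or at most x - 1 when x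
   is overlined. *)
Fixpoint ovp_exact (k M : nat) : R :=
  if k is k'.+1 then
    \sum_(1 <= x < M.+1) q ^+ x * (ovp_exact k' x + t * ovp_exact k' x.-1)
  else 1.

Lemma ovp_exactSS k M :
  ovp_exact k.+1 M.+1 =
  ovp_exact k.+1 M + q ^+ M.+1 * (ovp_exact k M.+1 + t * ovp_exact k M).
Proof. by rewrite /= big_nat_recr. Qed.

Lemma sum_bounded_overpartitions m k M : (M <= m)%N ->
  \sum_(s : k.-tuple ('I_m.+1 * bool) |
         is_bounded_overpartition M (op_decode s)) ovp_term (op_decode s) =
  ovp_exact k M.
Proof.
elim: k M => [|k IH] M leMm.
  rewrite (big_pred1 [tuple]) => [|s]; first by rewrite /ovp_term mulr1.
  by rewrite tuple0 /= eq_refl.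
pose G (i : 'I_m.+1) (b : bool) : R :=
  if (0 < i <= M)%N then t ^+ b * q ^+ i * ovp_exact k (if b then i.-1 else i)
  else 0.
have sum_tail (x : 'I_m.+1 * bool) :
  \sum_(s : k.-tuple ('I_m.+1 * bool) |
         is_bounded_overpartition M (op_decode [tuple of x :: s]))
     ovp_term (op_decode [tuple of x :: s]) = G x.1 x.2.
  case: x => i b; rewrite /G /=.
  under eq_bigl do rewrite /= bounded_overpartition_cons.
  case: (ltnP 0 i) => [i_gt0|]; last by rewrite big_pred0.
  case: (leqP i M) => [iM|]; last by rewrite big_pred0.
  rewrite -IH; last by case: b; lia.
  by rewrite mulr_sumr; apply: eq_bigr => s _; rewrite ovp_term_cons.
rewrite big_tuple_cons (eq_bigr _ (fun x _ => sum_tail x)) -(pair_bigA _ G) /=.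
rewrite (big_nat_widen _ _ m.+1) // big_geq_mkord [RHS]big_mkcond.
apply: eq_bigr => i _; rewrite big_bool /G.
have -> : true && (i < M.+1)%N && (0 < i)%N = (0 < i <= M)%N by lia.
by case: ifP => _ /=; [rewrite expr1 expr0 mul1r; ring | rewrite addr0].
Qed.

Definition ovp_atmost (M b : nat) : R := \sum_(0 <= k < b.+1) ovp_exact k M.

Lemma ogaussE a b :
  ogauss a b q t = if (b <= a)%N then ovp_atmost (a - b) b else 0.
Proof.
rewrite /ogauss /ovp_atmost big_mkord; case: ifP => // _; apply: eq_bigr => k _.
rewrite -(sum_bounded_overpartitions k (leqnn (a - b))); apply: eq_bigl => s.
rewrite /is_bounded_overpartition.
suff -> : all (fun p => p.1 <= a - b)%N (op_decode s) by rewrite andbT.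
by apply/allP => p /mapP [x _ ->] /=; rewrite -ltnS ltn_ord.
Qed.

Lemma ovp_atmostSS M b :
  ovp_atmost M.+1 b.+1 =
  ovp_atmost M b.+1 + q ^+ M.+1 * (ovp_atmost M.+1 b + t * ovp_atmost M b).
Proof.
rewrite /ovp_atmost (big_nat_recl b.+1) // [X in _ = X + _](big_nat_recl b.+1) //.
under eq_bigr do rewrite ovp_exactSS.
by rewrite big_split /= -mulr_sumr big_split /= -mulr_sumr; ring.
Qed.

Lemma ovp_atmost_max0 b : ovp_atmost 0 b = 1.
Proof.
by rewrite /ovp_atmost big_nat_recl // big1 ?addr0 // => k _; rewrite /= big_geq.
Qed.

Lemma ovp_atmost_len0 M : ovp_atmost M 0 = 1.
Proof. by rewrite /ovp_atmost big_nat1. Qed.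

(* [obinom k j] is the overpartition Gaussian polynomial with upper index
   k - 1; the extra value [obinom 0 j = 0] makes [obinomSS] hold for all k. *)
Definition obinom (k j : nat) : R := if k is k'.+1 then ogauss k' j q t else 0.

Lemma obinom_eq0 k j : (k <= j)%N -> obinom k j = 0.
Proof. by case: k => //= k le_kj; rewrite ogaussE ifN //; lia. Qed.

Lemma obinom_k0 k : obinom k.+1 0 = 1.
Proof. by rewrite /= ogaussE ovp_atmost_len0. Qed.

Lemma obinom_diag k : obinom k.+1 k = 1.
Proof. by rewrite /= ogaussE leqnn subnn ovp_atmost_max0. Qed.

Lemma obinomSS k j :
  obinom k.+2 j.+1 =
  obinom k.+1 j.+1 + q ^+ (k - j) * (obinom k.+1 j + t * obinom k j).
Proof.
case: (ltngtP j k) => [lt_jk|lt_kj|<-].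
- have [d ->] : exists d, k = (j + d).+1 by exists (k - j.+1)%N; lia.
  rewrite /= !ogaussE !ifT; try lia.
  by rewrite !subSS -!addnS !addKn ovp_atmostSS.
- by rewrite !obinom_eq0 //; try lia; rewrite !(mulr0, add0r).
- rewrite !obinom_diag (obinom_eq0 (leqnn j)) (@obinom_eq0 j.+1) //.
  by rewrite subnn expr0 mulr0 addr0 add0r mul1r.
Qed.

End OverpartitionGF.

Lemma qpoch0 (R : comNzRingType) (x q : R) : qpoch x q 0 = 1.
Proof. by rewrite /qpoch big_ord0. Qed.

Lemma qpochS (R : comNzRingType) (x q : R) k :
  qpoch x q k.+1 = (1 - x) * qpoch (x * q) q k.
Proof.
rewrite /qpoch big_ord_recl expr0 mulr1; congr (_ * _); apply: eq_bigr => i _.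
by rewrite lift0 exprS mulrA.
Qed.

Lemma qpochSr (R : comNzRingType) (x q : R) k :
  qpoch x q k.+1 = qpoch x q k * (1 - x * q ^+ k).
Proof. by rewrite /qpoch big_ord_recr. Qed.

Lemma qpochS_neq0 (R : idomainType) (x q : R) k :
  (qpoch x q k.+1 != 0) = (1 - x != 0) && (qpoch (x * q) q k != 0).
Proof. by rewrite qpochS mulf_eq0 negb_or. Qed.

Lemma qpochSr_neq0 (R : idomainType) (x q : R) k :
  (qpoch x q k.+1 != 0) = (qpoch x q k != 0) && (1 - x * q ^+ k != 0).
Proof. by rewrite qpochSr mulf_eq0 negb_or. Qed.

Section SeriesRecurrence.
Variables (F : fieldType) (q t : F).

Definition qratio (y : F) (j : nat) : F :=
  qpoch (- t * y * q) q j / qpoch (y * q) q j.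

Lemma qratio0 y : qratio y 0 = 1.
Proof. by rewrite /qratio !qpoch0 divr1. Qed.

Lemma qratioS y j :
  qratio y j.+1 = (1 + t * y * q) / (1 - y * q) * qratio (y * q) j.
Proof. by rewrite /qratio !qpochS mulf_div !mulNr opprK !mulrA. Qed.

Lemma qratioSr y j :
  qratio y j.+1 = qratio y j * ((1 + t * y * q ^+ j.+1) / (1 - y * q ^+ j.+1)).
Proof.
rewrite /qratio !qpochSr mulf_div; congr (_ * _ / (_ * _)).
  by rewrite exprS !mulrA !mulNr opprK.
by rewrite exprS !mulrA.
Qed.

(* [Spartial N k y] is S(k; t, y; q) with the sum cut after its N-th summand
   [Sterm k y (N - 1)].  Summands with j >= k vanish, so the cut is harmless
   once k <= N; keeping N free lets [SpartialSS] relate different k. *)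
Definition Sterm (k : nat) (y : F) (j : nat) : F :=
  (t * obinom q t k j * qratio y j + obinom q t k.+1 j.+1 * qratio y j.+1)
  * y ^+ j.+1 * q ^+ (j.+1 ^ 2).

Definition Spartial (N k : nat) (y : F) : F := 1 + \sum_(j < N) Sterm k y j.

Lemma Sfun_Spartial n y : (0 < n)%N -> Sfun n t y q = Spartial n n y.
Proof.
case: n => [|n] // _.
rewrite /Sfun /Spartial big_add1 /= big_mkord; congr (_ + _); apply: eq_bigr => j _.
by rewrite /Sterm /qratio /=; ring.
Qed.

Lemma Sterm_recS k y j :
  Sterm k.+2 y j.+1 = Sterm k.+1 y j.+1 +
    y * q ^+ k.+2 * ((1 + t * y * q) / (1 - y * q)) *
    (Sterm k.+1 (y * q) j + t * Sterm k (y * q) j).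
Proof.
rewrite /Sterm; case: (leqP j k) => [le_jk|lt_kj]; last first.
  by rewrite !obinom_eq0 //; try lia; ring.
rewrite (obinomSS q t k.+1 j.+1) (obinomSS q t k j) !subSS.
rewrite (qratioS y j.+1) (qratioS y j).
have -> : q ^+ k.+2 = q ^+ (k - j) * q ^+ j.+2 by rewrite -exprD; congr (_ ^+ _); lia.
have -> : q ^+ (j.+2 ^ 2) = q ^+ (j.+1 ^ 2) * q ^+ j.+1 * q ^+ j.+2.
  by rewrite -!exprD; congr (_ ^+ _); rewrite -!mulnn; nia.
rewrite exprS exprMn; set c := (1 + t * y * q) / (1 - y * q); ring.
Qed.

Lemma Sterm_rec0 k y :
  Sterm k.+2 y 0 = Sterm k.+1 y 0 +
    y * q ^+ k.+2 * ((1 + t * y * q) / (1 - y * q)) * (1 + t).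
Proof.
rewrite /Sterm (obinomSS q t k.+1 0) !obinom_k0 (qratioS y 0) !qratio0 subn0 !exprSr.
set c := (1 + t * y * q) / (1 - y * q); ring.
Qed.

Lemma SpartialSS N k y :
  Spartial N.+1 k.+2 y = Spartial N.+1 k.+1 y +
    y * q ^+ k.+2 * ((1 + t * y * q) / (1 - y * q)) *
    (Spartial N k.+1 (y * q) + t * Spartial N k (y * q)).
Proof.
rewrite /Spartial !big_ord_recl Sterm_rec0.
under eq_bigr do rewrite lift0 Sterm_recS.
under [in RHS]eq_bigr do rewrite lift0.
rewrite big_split /= -mulr_sumr big_split /= -mulr_sumr.
set c := (1 + t * y * q) / (1 - y * q); ring.
Qed.

Lemma Spartial_k0 N y : Spartial N 0 y = 1.
Proof.
rewrite /Spartial big1 ?addr0 // => j _.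
by rewrite /Sterm !obinom_eq0 // !mulr0 !mul0r addr0 !mul0r.
Qed.

Lemma Spartial_k1 N y : Spartial N.+1 1 y = 1 + (t + qratio y 1) * y * q.
Proof.
rewrite /Spartial big_ord_recl big1 => [|j _].
  by rewrite /Sterm obinom_k0 obinom_diag qratio0 expr1; ring.
by rewrite lift0 /Sterm !obinom_eq0 // !mulr0 !mul0r addr0 !mul0r.
Qed.

Lemma Spartial_eq_qratio k N y :
  (k <= N)%N -> qpoch (y * q) q k != 0 -> Spartial N k y = qratio y k.
Proof.
elim/ltn_ind: k N y => -[|[|k]] IH N y le_kN nz_k.
- by rewrite Spartial_k0 qratio0.
- case: N le_kN => // N _.
  move: nz_k; rewrite qpochS_neq0 qpoch0 oner_neq0 andbT => nz1.
  by rewrite Spartial_k1 (qratioS y 0) qratio0; field.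
- case: N le_kN => // N le_kN.
  have /andP[nz_y nz_last] :
    (qpoch (y * q) q k.+1 != 0) && (1 - y * q * q ^+ k.+1 != 0).
    by rewrite -qpochSr_neq0.
  have /andP[nz_1 nz_yq] : (1 - y * q != 0) && (qpoch (y * q * q) q k.+1 != 0).
    by rewrite -qpochS_neq0.
  have nz_yq' : qpoch (y * q * q) q k != 0.
    by move: nz_yq; rewrite qpochSr_neq0 => /andP[].
  rewrite SpartialSS !IH //; try lia.
  rewrite (qratioS y k.+1) (qratioS y k) (qratioSr (y * q) k).
  set r := qratio (y * q) k; rewrite exprS.
  by field; rewrite nz_1 nz_last.
Qed.

End SeriesRecurrence.

Theorem theorem3p4 (F : fieldType) (n : nat) (t y q : F) :
  (0 < n)%N ->
  qpoch (y * q) q n != 0 ->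
  Sfun n t y q = qpoch (- t * y * q) q n / qpoch (y * q) q n.
Proof.
move=> n_gt0 nz_n.
by rewrite Sfun_Spartial // Spartial_eq_qratio.
Qed.
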